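(* For $\omega=(\omega_1,\omega_2)\in\{0,1\}^2$ and $E\in\mathbb{R}$, let $A^\omega(E)\in\mathrm{Sp}_2(\mathbb{R})$ be the $4\times4$ real matrix defined by ${}^t(u_1(1),u_2(1),u_1'(1),u_2'(1))=A^\omega(E)\,{}^t(u_1(0),u_2(0),u_1'(0),u_2'(0))$ for every solution $u=(u_1,u_2)$ on $[0,1]$ of the system $-u''+\begin{pmatrix}\omega_1&1\\1&\omega_2\end{pmatrix}u=Eu$. Let $\mathcal{O}\subset\mathrm{Sp}_2(\mathbb{R})$ be a neighborhood of the identity as described in the context. Then for every $E\in(2,+\infty)$ and every $\omega\in\{0,1\}^2$ there exists an integer $m_\omega(E)\ge1$ such that $(A^\omega(E))^{m_\omega(E)}\in\mathcal{O}$.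
   Context: $\mathrm{Sp}_2(\mathbb{R})$ denotes the real symplectic group of $4\times 4$ matrices, with Lie algebra $\mathfrak{sp}_2(\mathbb{R})$. $\mathcal{O}$ is a neighborhood of the identity in $\mathrm{Sp}_2(\mathbb{R})$ on which $\log=\exp^{-1}$ is a well-defined diffeomorphism and such that elements $g_1,\dots,g_m\in\mathcal{O}$ generate a dense subgroup of $\mathrm{Sp}_2(\mathbb{R})$ if and only if $\log g_1,\dots,\log g_m$ generate $\mathfrak{sp}_2(\mathbb{R})$ as a Lie algebra (such a neighborhood exists by a theorem of Breuillard and Gelander). *)

From HB Require Import structures.
From mathcomp Require Import all_boot all_order all_algebra.
From mathcomp Require Import all_classical all_reals all_analysis.
Set Implicit Arguments. Unset Strict Implicit. Unset Printing Implicit Defensive.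
Import Order.TTheory GRing.Theory Num.Theory.
Import numFieldNormedType.Exports.
Local Open Scope classical_set_scope.
Local Open Scope ring_scope.

(* over an arbitrary R : realType.
   Coordinates on R^4 are (u1, u2, u1', u2'). *)

Section Defs.
Variable R : realType.

Definition Jsymp : 'M[R]_4 := @block_mx R 2 2 2 2 0 1%:M (- 1%:M) 0.

Definition Sp2 : set 'M[R]_4 := [set M | M^T *m Jsymp *m M = Jsymp].

Definition sp2 : set 'M[R]_4 := [set X | X^T *m Jsymp + Jsymp *m X = 0].

Definition mexp (X : 'M[R]_4) : 'M[R]_4 :=
  limn (fun n : nat => \sum_(k < n) (k`!%:R)^-1 *: X ^+ k).

Definition grp_span (s : seq 'M[R]_4) : set 'M[R]_4 :=
  [set g | forall G : set 'M[R]_4,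
     G 1 -> (forall x y, G x -> G y -> G (x * y)) ->
     (forall x, G x -> G (invmx x)) ->
     (forall x, x \in s -> G x) -> G g].

Definition lie_span (s : seq 'M[R]_4) : set 'M[R]_4 :=
  [set Z | forall L : set 'M[R]_4,
     L 0 -> (forall X Y, L X -> L Y -> L (X + Y)) ->
     (forall (a : R) X, L X -> L (a *: X)) ->
     (forall X Y, L X -> L Y -> L (X * Y - Y * X)) ->
     (forall X, X \in s -> L X) -> L Z].

Definition nbhs_id_Sp2 (O : set 'M[R]_4) : Prop :=
  O `<=` Sp2 /\ exists U : set 'M[R]_4, open U /\ U 1 /\ U `&` Sp2 `<=` O.

(* the Breuillard--Gelander neighborhood hypothesis, with lg playing log *)
Definition BG_neighborhood (O : set 'M[R]_4) (lg : 'M[R]_4 -> 'M[R]_4) : Prop :=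
  nbhs_id_Sp2 O /\
  (forall g, O g -> sp2 (lg g) /\ mexp (lg g) = g) /\
  {within O, continuous lg} /\
  (exists V : set 'M[R]_4, open V /\ lg @` O = V `&` sp2) /\
  (forall s : seq 'M[R]_4, (forall g, g \in s -> O g) ->
     (closure (grp_span s) = Sp2 <-> lie_span (map lg s) = sp2)).

Definition state (u1 u2 : R -> R) (t : R) : 'cV[R]_4 :=
  \col_(i < 4) nth 0 [:: u1 t; u2 t; derive1 u1 t; derive1 u2 t] i.

Definition is_solution (w1 w2 : bool) (E : R) (u1 u2 : R -> R) : Prop :=
  forall t : R,
    [/\ derivable u1 t 1, derivable u2 t 1,
        derivable (derive1 u1) t 1 /\ derivable (derive1 u2) t 1,
        - derive1 (derive1 u1) t + w1%:R * u1 t + u2 t = E * u1 t &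
        - derive1 (derive1 u2) t + u1 t + w2%:R * u2 t = E * u2 t].

Definition is_transfer (w1 w2 : bool) (E : R) (A : 'M[R]_4) : Prop :=
  forall u1 u2 : R -> R, is_solution w1 w2 E u1 u2 ->
    state u1 u2 1 = A *m state u1 u2 0.

End Defs.

(* The potential [[w1, 1], [1, w2]] has the orthogonal eigenvectors (1, c) and
   (-c, 1), with eigenvalues w1 + c and w2 - c at most 2 < E.  The system therefore
   decouples into two harmonic oscillators of frequencies k1, k2 > 0, and A^n acts
   on each normal mode as the rotation by n k_j of (position, velocity / k_j).
   Since each oscillator has a constant Wronskian and the modes are orthogonal,
   every A^n is symplectic.  By the pigeonhole principle some n >= 1 makes both
   rotations close to the identity, so A^n lies in any neighbourhood of 1 in
   Sp_2(R). *)

From HB Require Import structures.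
From mathcomp Require Import all_boot all_order all_algebra.
From mathcomp Require Import all_classical all_reals all_analysis.
From mathcomp Require Import ring lra.

Set Implicit Arguments.
Unset Strict Implicit.
Unset Printing Implicit Defensive.

Import Order.TTheory GRing.Theory Num.Theory.
Import numFieldNormedType.Exports.
Local Open Scope ring_scope.

Section HarmonicOscillator.
Variables (R : realType) (k : R).
Hypothesis k_neq0 : k != 0.

Definition osc_pos (x y t : R) : R := x * cos (k * t) + y / k * sin (k * t).
Definition osc_vel (x y t : R) : R := y * cos (k * t) - x * k * sin (k * t).

Lemma is_derive_scale (t : R) : is_derive t 1 ( *%R k) k.
Proof. by have := is_deriveZ k (is_derive_id t (1 : R)); rewrite [k *: 1]mulr1. Qed.

Lemma is_derive_cos_scale (t : R) :
  is_derive t 1 (fun t => cos (k * t)) (- sin (k * t) * k).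
Proof.
apply: (is_derive1_comp (f := cos) (g := fun t => k * t)).
exact: is_derive_scale.
Qed.

Lemma is_derive_sin_scale (t : R) :
  is_derive t 1 (fun t => sin (k * t)) (cos (k * t) * k).
Proof.
apply: (is_derive1_comp (f := sin) (g := fun t => k * t)).
exact: is_derive_scale.
Qed.

Lemma is_derive_osc_pos (x y t : R) : is_derive t 1 (osc_pos x y) (osc_vel x y t).
Proof.
have := is_deriveD (is_deriveZ x (is_derive_cos_scale t))
                   (is_deriveZ (y / k) (is_derive_sin_scale t)).
by move=> D; apply: (is_derive_eq D); rewrite /osc_vel /GRing.scale /=; field.
Qed.

Lemma is_derive_osc_vel (x y t : R) :
  is_derive t 1 (osc_vel x y) (- k ^+ 2 * osc_pos x y t).
Proof.
have := is_deriveB (is_deriveZ y (is_derive_cos_scale t))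
                   (is_deriveZ (x * k) (is_derive_sin_scale t)).
by move=> D; apply: (is_derive_eq D); rewrite /osc_pos /GRing.scale /=; field.
Qed.

Lemma osc_pos0 (x y : R) : osc_pos x y 0 = x.
Proof. by rewrite /osc_pos mulr0 cos0 sin0 mulr1 mulr0 addr0. Qed.

Lemma osc_vel0 (x y : R) : osc_vel x y 0 = y.
Proof. by rewrite /osc_vel mulr0 cos0 sin0 mulr1 mulr0 subr0. Qed.

Lemma osc_posD (x y s t : R) :
  osc_pos x y (s + t) = osc_pos (osc_pos x y s) (osc_vel x y s) t.
Proof. by rewrite /osc_pos /osc_vel mulrDr cosD sinD; field. Qed.

Lemma osc_velD (x y s t : R) :
  osc_vel x y (s + t) = osc_vel (osc_pos x y s) (osc_vel x y s) t.
Proof. by rewrite /osc_pos /osc_vel mulrDr cosD sinD; field. Qed.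

Lemma osc_wronskian (x y x' y' t : R) :
  osc_pos x y t * osc_vel x' y' t - osc_vel x y t * osc_pos x' y' t = x * y' - y * x'.
Proof. by rewrite /osc_pos /osc_vel -[RHS]mulr1 -(cos2Dsin2 (k * t)); field. Qed.

Definition almost_period (e t : R) : Prop :=
  `|cos (k * t) - 1| <= e /\ `|sin (k * t)| <= e.

Lemma osc_pos_near (e t x y : R) : almost_period e t ->
  `|osc_pos x y t - x| <= (`|x| + `|y / k|) * e.
Proof.
case=> cos_near sin_near.
have -> : osc_pos x y t - x = x * (cos (k * t) - 1) + y / k * sin (k * t).
  by rewrite /osc_pos; ring.
rewrite mulrDl; apply: (le_trans (ler_normD _ _)).
by apply: lerD; rewrite normrM; apply: ler_wpM2l.
Qed.

Lemma osc_vel_near (e t x y : R) : almost_period e t ->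
  `|osc_vel x y t - y| <= (`|y| + `|x * k|) * e.
Proof.
case=> cos_near sin_near.
have -> : osc_vel x y t - y = y * (cos (k * t) - 1) + - (x * k) * sin (k * t).
  by rewrite /osc_vel; ring.
rewrite mulrDl; apply: (le_trans (ler_normD _ _)).
by apply: lerD; rewrite normrM ?normrN; apply: ler_wpM2l.
Qed.

End HarmonicOscillator.

Definition vec2 (R : realType) (a b : R) : 'cV[R]_2 := \col_(i < 2) nth 0 [:: a; b] i.

Definition mode_state (R : realType) (p q x y : R) : 'cV[R]_(2 + 2) :=
  col_mx (x *: vec2 p q) (y *: vec2 p q).

Lemma vec2E (R : realType) (u : 'cV[R]_2) : u = vec2 (u 0 0) (u 1 0).
Proof.
apply/matrixP => i j; rewrite mxE ord1.
by case: i => [[|[|//]] ?]; congr (u _ _); apply: val_inj.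
Qed.

Lemma vec2_scale (R : realType) (a b x : R) : vec2 (a * x) (b * x) = x *: vec2 a b.
Proof.
by apply/matrixP => i j; rewrite !mxE; case: i => [[|[|//]] ?]; rewrite /= mulrC.
Qed.

Lemma state_col_mx (R : realType) (u1 u2 : R -> R) (t : R) :
  state u1 u2 t = col_mx (vec2 (u1 t) (u2 t)) (vec2 (derive1 u1 t) (derive1 u2 t)).
Proof.
apply/matrixP => i j; rewrite !mxE.
case: splitP => l; rewrite mxE; case: i => [[|[|[|[|//]]]] ?] /=;
  by case: l => [[|[|//]] ?].
Qed.

Lemma mode_stateB (R : realType) (p q x y x' y' : R) :
  mode_state p q x y - mode_state p q x' y' = mode_state p q (x - x') (y - y').
Proof. by rewrite /mode_state opp_col_mx add_col_mx -!scalerBl. Qed.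

Lemma mode_state_entry_le (R : realType) (p q x y M : R) (r : 'I_4) :
  `|p| <= M -> `|q| <= M -> `|mode_state p q x y r 0| <= M * (`|x| + `|y|).
Proof.
move=> pM qM; have M_ge0 : 0 <= M by apply: le_trans pM.
have entry_le i : `|vec2 p q i 0| <= M by rewrite mxE; case: i => [[|[|//]] ?].
rewrite mxE; case: splitP => i _; rewrite mxE normrM mulrC.
- by apply: ler_pM => //; rewrite lerDl.
- by apply: ler_pM => //; rewrite lerDr.
Qed.

Section NormalModes.
Variables (R : realType) (w1 w2 : bool) (E lam p q k : R).
Hypothesis k_neq0 : k != 0.
Hypotheses (eigen1 : w1%:R * p + q = lam * p) (eigen2 : p + w2%:R * q = lam * q).
Hypothesis k_sqr : k ^+ 2 = E - lam.

Lemma is_derive_scaled_osc (a x y t : R) :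
  is_derive t 1 (fun t => a * osc_pos k x y t) (a * osc_vel k x y t) /\
  is_derive t 1 (fun t => a * osc_vel k x y t) (a * (- k ^+ 2 * osc_pos k x y t)).
Proof.
by split; apply: is_deriveZ; [exact: is_derive_osc_pos | exact: is_derive_osc_vel].
Qed.

Lemma derive1_scaled_osc (a x y : R) :
  derive1 (fun t => a * osc_pos k x y t) = (fun t => a * osc_vel k x y t) /\
  derive1 (fun t => a * osc_vel k x y t) = (fun t => a * (- k ^+ 2 * osc_pos k x y t)).
Proof.
by split; apply/funext => t; rewrite derive1E;
  [case: (is_derive_scaled_osc a x y t).1 | case: (is_derive_scaled_osc a x y t).2].
Qed.

Lemma mode_is_solution (x y : R) :
  is_solution w1 w2 E (fun t => p * osc_pos k x y t) (fun t => q * osc_pos k x y t).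
Proof.
move=> t; have [-> ->] := derive1_scaled_osc p x y.
have [-> ->] := derive1_scaled_osc q x y.
have [Dp Dp'] := is_derive_scaled_osc p x y t.
have [Dq Dq'] := is_derive_scaled_osc q x y t.
split; [exact: ex_derive | exact: ex_derive | by split; exact: ex_derive | |].
- apply/eqP; rewrite -subr_eq0 k_sqr; apply/eqP.
  by transitivity ((w1%:R * p + q - lam * p) * osc_pos k x y t);
    [ring | rewrite eigen1 subrr mul0r].
- apply/eqP; rewrite -subr_eq0 k_sqr; apply/eqP.
  by transitivity ((p + w2%:R * q - lam * q) * osc_pos k x y t);
    [ring | rewrite eigen2 subrr mul0r].
Qed.

Lemma state_mode_solution (x y t : R) :
  state (fun t => p * osc_pos k x y t) (fun t => q * osc_pos k x y t) t =
  mode_state p q (osc_pos k x y t) (osc_vel k x y t).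
Proof.
rewrite state_col_mx (derive1_scaled_osc p x y).1 (derive1_scaled_osc q x y).1.
by rewrite !vec2_scale.
Qed.

Lemma transfer_pow_mode (A : 'M[R]_4) : is_transfer w1 w2 E A -> forall n x y,
  A ^+ n *m mode_state p q x y = mode_state p q (osc_pos k x y n%:R) (osc_vel k x y n%:R).
Proof.
move=> hA; elim=> [|n IH] x y; first by rewrite expr0 mul1mx osc_pos0 osc_vel0.
have A_mode : A *m mode_state p q x y = mode_state p q (osc_pos k x y 1) (osc_vel k x y 1).
  by have := hA _ _ (mode_is_solution x y); rewrite !state_mode_solution osc_pos0 osc_vel0.
by rewrite exprSr -mulmxE -mulmxA A_mode IH -osc_posD // -osc_velD // -natr1 addrC.
Qed.

End NormalModes.

Lemma mxform_inj (R : comNzRingType) (n : nat) (X Y : 'M[R]_n) :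
  (forall v w : 'cV_n, v^T *m X *m w = v^T *m Y *m w) -> X = Y.
Proof.
move=> XY; apply/matrixP => i j.
move/matrixP/(_ 0 0): (XY (delta_mx i 0) (delta_mx j 0)).
by rewrite trmx_delta -!rowE -!colE !mxE.
Qed.

Section SymplecticForm.
Variable R : realType.

Lemma symp_form_col_mx (vt vb wt wb : 'cV[R]_2) :
  (col_mx vt vb)^T *m Jsymp R *m col_mx wt wb = vt^T *m wb - vb^T *m wt.
Proof.
rewrite tr_col_mx.
(* [Jsymp R] is typed at ['M_4]; expose its ['M_(2 + 2)] block structure. *)
change (row_mx vt^T vb^T *m (block_mx 0 1%:M (- 1%:M) 0 : 'M[R]_(2 + 2)) *m col_mx wt wb
  = vt^T *m wb - vb^T *m wt).
rewrite mul_row_block !mulmx0 !mulmx1 add0r addr0 mulmxN mul_row_col mulNmx.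
by rewrite mulmx1 addrC.
Qed.

Lemma vec2_dot (a b a' b' : R) : (vec2 a b)^T *m vec2 a' b' = (a * a' + b * b')%:M.
Proof.
apply/matrixP => i j; rewrite !ord1 !mxE !big_ord_recr big_ord0 /= !mxE /=.
by rewrite add0r mulr1n.
Qed.

Lemma symp_form_mode (p q x y p' q' x' y' : R) :
  (mode_state p q x y)^T *m Jsymp R *m mode_state p' q' x' y' =
  ((x * y' - y * x') * (p * p' + q * q'))%:M.
Proof.
rewrite symp_form_col_mx ![(_ *: vec2 p q)^T]linearZ /= -!scalemxAl -!scalemxAr.
by rewrite !vec2_dot !scale_scalar_mx -raddfB /=; congr _%:M; ring.
Qed.

Lemma Sp2_of_form_preserved (M : 'M[R]_4) :
  (forall v w : 'cV_4, (M *m v)^T *m Jsymp R *m (M *m w) = v^T *m Jsymp R *m w) ->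
  Sp2 M.
Proof. by move=> MJ; apply: mxform_inj => v w; rewrite -MJ trmx_mul !mulmxA. Qed.

End SymplecticForm.

Section TwoModes.
Variables (R : realType) (c : R).

Lemma mode_norm_neq0 : 1 + c ^+ 2 != 0.
Proof. by rewrite gt_eqF // ltr_pwDl // sqr_ge0. Qed.

Definition along (u : 'cV[R]_2) : R := (u 0 0 + c * u 1 0) / (1 + c ^+ 2).
Definition across (u : 'cV[R]_2) : R := (u 1 0 - c * u 0 0) / (1 + c ^+ 2).

Lemma vec2_decomp (u : 'cV[R]_2) : u = along u *: vec2 1 c + across u *: vec2 (- c) 1.
Proof.
rewrite {1}[u]vec2E; apply/matrixP => i j; rewrite !mxE; have := mode_norm_neq0.
by case: i => [[|[|//]] ?] /= => ?; rewrite /along /across; field.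
Qed.

Lemma mode_decomp (v : 'cV[R]_(2 + 2)) :
  v = mode_state 1 c (along (usubmx v)) (along (dsubmx v))
    + mode_state (- c) 1 (across (usubmx v)) (across (dsubmx v)).
Proof. by rewrite /mode_state add_col_mx -!vec2_decomp vsubmxK. Qed.

Lemma symp_form_two_modes (x1 y1 x2 y2 x1' y1' x2' y2' : R) :
  (mode_state 1 c x1 y1 + mode_state (- c) 1 x2 y2)^T *m Jsymp R
    *m (mode_state 1 c x1' y1' + mode_state (- c) 1 x2' y2') =
  ((1 + c ^+ 2) * ((x1 * y1' - y1 * x1') + (x2 * y2' - y2 * x2')))%:M.
Proof.
rewrite [(_ + _)^T]linearD /= !mulmxDl !mulmxDr !symp_form_mode -!raddfD /=.
by congr _%:M; ring.
Qed.

Section TransferPowers.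
Variables (k1 k2 : R) (A : 'M[R]_4).
Hypotheses (k1_neq0 : k1 != 0) (k2_neq0 : k2 != 0).
Hypothesis A_mode1 : forall n x y,
  A ^+ n *m mode_state 1 c x y = mode_state 1 c (osc_pos k1 x y n%:R) (osc_vel k1 x y n%:R).
Hypothesis A_mode2 : forall n x y,
  A ^+ n *m mode_state (- c) 1 x y = mode_state (- c) 1 (osc_pos k2 x y n%:R) (osc_vel k2 x y n%:R).

Lemma transfer_pow_symplectic (n : nat) : Sp2 (A ^+ n).
Proof.
apply: Sp2_of_form_preserved => v w.
rewrite (mode_decomp v) (mode_decomp w) ![A ^+ n *m (_ + _)]mulmxDr !A_mode1 !A_mode2.
by rewrite !symp_form_two_modes !osc_wronskian.
Qed.

Definition mode_size (v : 'cV[R]_(2 + 2)) : R :=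
  let x1 := along (usubmx v) in let y1 := along (dsubmx v) in
  let x2 := across (usubmx v) in let y2 := across (dsubmx v) in
  (1 + `|c|) * ((`|x1| + `|y1 / k1|) + (`|y1| + `|x1 * k1|)
                + ((`|x2| + `|y2 / k2|) + (`|y2| + `|x2 * k2|))).

Lemma mode_size_ge0 (v : 'cV[R]_(2 + 2)) : 0 <= mode_size v.
Proof. by rewrite /mode_size; apply: mulr_ge0; do ! apply: addr_ge0. Qed.

Lemma transfer_pow_near (n : nat) (e : R) (v : 'cV[R]_(2 + 2)) (r : 'I_4) :
  almost_period k1 e n%:R -> almost_period k2 e n%:R ->
  `|(A ^+ n *m v - v) r 0| <= mode_size v * e.
Proof.
move=> near1 near2; rewrite /mode_size.
set x1 := along _; set y1 := along _; set x2 := across _; set y2 := across _.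
have -> : v = mode_state 1 c x1 y1 + mode_state (- c) 1 x2 y2 := mode_decomp v.
rewrite mulmxDr A_mode1 A_mode2 opprD addrACA !mode_stateB mxE.
have c_le : `|c| <= 1 + `|c| by rewrite lerDr.
have one_le : `|1 : R| <= 1 + `|c| by rewrite normr1 lerDl.
have oppc_le : `|- c| <= 1 + `|c| by rewrite normrN.
apply: (le_trans (ler_normD _ _)).
apply: (le_trans (lerD (mode_state_entry_le _ _ r one_le c_le)
                       (mode_state_entry_le _ _ r oppc_le one_le))).
rewrite -mulrDr -mulrA ler_wpM2l ?addr_ge0 // mulrDl.
by apply: lerD; rewrite mulrDl; apply: lerD;
  [exact: osc_pos_near | exact: osc_vel_near | exact: osc_pos_near | exact: osc_vel_near].
Qed.

Lemma transfer_pow_near1 (eps : R) : 0 < eps -> exists2 e : R, 0 < e &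
  forall n, almost_period k1 e n%:R -> almost_period k2 e n%:R -> ball (1 : 'M[R]_4) eps (A ^+ n).
Proof.
move=> eps_gt0; set K := \sum_(j < 4) mode_size (delta_mx j 0).
have K_ge0 : 0 <= K by apply: sumr_ge0 => j _; apply: mode_size_ge0.
exists (eps / (K + 1)) => [|n near1 near2]; first by rewrite divr_gt0 // ltr_wpDl.
rewrite /ball /= /mx_ball; split=> // i j; rewrite /ball /=.
have -> : (1%:M : 'M[R]_4) i j - (A ^+ n) i j = - (A ^+ n *m delta_mx j 0 - delta_mx j 0 : 'cV_4) i 0.
  by rewrite -colE !mxE eqxx andbT opprB.
rewrite normrN; apply: (le_lt_trans (transfer_pow_near _ _ near1 near2)).
have size_le : mode_size (delta_mx j 0) <= K.
  by rewrite /K (bigD1 j) //= lerDl sumr_ge0 // => l _; apply: mode_size_ge0.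
rewrite mulrA ltr_pdivrMr ?ltr_wpDl //.
apply: (le_lt_trans (ler_wpM2r (ltW eps_gt0) size_le)).
by rewrite mulrDr mulr1 mulrC ltrDl.
Qed.

End TransferPowers.
End TwoModes.

Section Recurrence.
Variable R : realType.

Definition box (N : nat) (z : R) : 'I_(N.*2).+1 := inord (Num.truncn ((z + 1) * N%:R)).

Lemma box_truncn_lt (N : nat) (z : R) : -1 <= z <= 1 ->
  (Num.truncn ((z + 1) * N%:R) < (N.*2).+1)%N.
Proof.
move=> /andP[z1 z2]; rewrite ltnS truncn_le_nat -addn1 -muln2 natrD natrM.
have : 0 <= (N%:R : R) by []; nra.
Qed.

Lemma box_eq_dist (N : nat) (z z' : R) : -1 <= z <= 1 -> -1 <= z' <= 1 ->
  box N z = box N z' -> `|z - z'| * N%:R < 1.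
Proof.
have N_ge0 : 0 <= (N%:R : R) by [].
move=> /[dup] /(box_truncn_lt N) zN /andP[z1 _] /[dup] /(box_truncn_lt N) z'N /andP[z'1 _].
move/(congr1 val); rewrite /box /= !inordK // => eq_trunc.
have /andP[a1 a2] := truncn_itv (mulr_ge0 (ltac:(lra) : 0 <= z + 1) N_ge0).
have /andP[b1 b2] := truncn_itv (mulr_ge0 (ltac:(lra) : 0 <= z' + 1) N_ge0).
move: a1 a2 b1 b2; rewrite eq_trunc -natr1.
set t := (Num.truncn _)%:R => a1 a2 b1 b2.
by rewrite -(ger0_norm N_ge0) -normrM ltr_norml; apply/andP; split; lra.
Qed.

Lemma rotation_distE (a b : R) :
  (cos (a - b) - 1) ^+ 2 + sin (a - b) ^+ 2 = (cos a - cos b) ^+ 2 + (sin a - sin b) ^+ 2.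
Proof.
apply/eqP; rewrite -subr_eq0 cosB sinB; apply/eqP.
transitivity ((cos a ^+ 2 + sin a ^+ 2 - 1) * (cos b ^+ 2 + sin b ^+ 2 - 1)); first by ring.
by rewrite !cos2Dsin2 subrr mul0r.
Qed.

Lemma almost_period_sub (k e s t : R) :
  `|cos (k * s) - cos (k * t)| <= e / 2 -> `|sin (k * s) - sin (k * t)| <= e / 2 ->
  almost_period k e (s - t).
Proof.
rewrite /almost_period mulrBr; have := rotation_distE (k * s) (k * t).
set X := cos _ - 1; set Y := sin (_ - _); set U := cos _ - cos _; set V := sin _ - sin _.
move=> dist; rewrite !ler_norml => /andP[U1 U2] /andP[V1 V2].
by split; apply/andP; split; nra.
Qed.

Lemma simultaneous_recurrence (k1 k2 e : R) : 0 < e ->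
  exists n : nat, (0 < n)%N /\ almost_period k1 e n%:R /\ almost_period k2 e n%:R.
Proof.
move=> e_gt0; set N := (Num.truncn (2 / e)).+1.
have eN : 2 < e * N%:R by rewrite mulrC -ltr_pdivrMr //; apply: truncnS_gt.
have box_close (z z' : R) : -1 <= z <= 1 -> -1 <= z' <= 1 -> box N z = box N z' ->
    `|z - z'| <= e / 2.
  move=> z1 z'1 /(box_eq_dist z1 z'1) zz'; have := normr_ge0 (z - z'); nra.
set K := (N.*2).+1.
pose f (m : 'I_(K * K * (K * K)).+1) :=
  ((box N (cos (k1 * m%:R)), box N (sin (k1 * m%:R))),
   (box N (cos (k2 * m%:R)), box N (sin (k2 * m%:R)))).
suff recur_of_collision (i j : 'I_(K * K * (K * K)).+1) : (i < j)%N -> f i = f j ->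
    exists n : nat, (0 < n)%N /\ almost_period k1 e n%:R /\ almost_period k2 e n%:R.
  have /dinjectivePn [m1 _ [m2 /andP[m21 _] f12]] : ~~ injectiveb f.
    by apply/negP => /injectiveP /leq_card; rewrite !card_prod !card_ord ltnn.
  case: (ltngtP m1 m2) => [lt12 | lt21 | /val_inj eq12].
  - exact: recur_of_collision f12.
  - exact: recur_of_collision (esym f12).
  - by rewrite eq12 eqxx in m21.
move=> lt_ij f_ij; exists (j - i)%N; split; first by rewrite subn_gt0.
rewrite natrB; last exact: ltnW.
move: f_ij => -[c1 s1 c2 s2].
have cos_bound (x : R) : -1 <= cos x <= 1 by rewrite cos_geN1 cos_le1.
have sin_bound (x : R) : -1 <= sin x <= 1 by rewrite sin_geN1 sin_le1.
split; apply: almost_period_sub.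
- exact: box_close _ _ (cos_bound _) (cos_bound _) (esym c1).
- exact: box_close _ _ (sin_bound _) (sin_bound _) (esym s1).
- exact: box_close _ _ (cos_bound _) (cos_bound _) (esym c2).
- exact: box_close _ _ (sin_bound _) (sin_bound _) (esym s2).
Qed.

End Recurrence.

Lemma potential_eigenvectors (R : realType) (w1 w2 : bool) : exists c : R,
  [/\ w1%:R * 1 + c = (w1%:R + c) * 1, 1 + w2%:R * c = (w1%:R + c) * c,
      w1%:R * - c + 1 = (w2%:R - c) * - c, - c + w2%:R * 1 = (w2%:R - c) * 1
    & w1%:R + c <= 2 /\ w2%:R - c <= 2].
Proof.
pose s := Num.sqrt ((w1%:R - w2%:R) ^+ 2 + 4 : R).
have s_ge0 : 0 <= s by apply: sqrtr_ge0.
have s_sqr : s ^+ 2 = (w1%:R - w2%:R) ^+ 2 + 4 by rewrite sqr_sqrtr // addr_ge0 // sqr_ge0.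
exists ((s - (w1%:R - w2%:R)) / 2).
by move: s s_ge0 s_sqr; case: w1; case: w2 => s /= s_ge0 s_sqr; split; nra.
Qed.

Theorem proposition1 (R : realType) (O : set 'M[R]_4) (lg : 'M[R]_4 -> 'M[R]_4)
  (hO : BG_neighborhood O lg)
  (w1 w2 : bool) (E : R) (hE : 2 < E)
  (A : 'M[R]_4) (hA : is_transfer w1 w2 E A) :
  exists m : nat, (1 <= m)%N /\ O (A ^+ m).
Proof.
have [[_ [U [U_open [U1 U_Sp]]]] _] := hO.
have [c [eig11 eig12 eig21 eig22 [le1 le2]]] := potential_eigenvectors R w1 w2.
set k1 := Num.sqrt (E - (w1%:R + c)); set k2 := Num.sqrt (E - (w2%:R - c)).
have k1_neq0 : k1 != 0 by rewrite gt_eqF // sqrtr_gt0; lra.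
have k2_neq0 : k2 != 0 by rewrite gt_eqF // sqrtr_gt0; lra.
have k1_sqr : k1 ^+ 2 = E - (w1%:R + c) by rewrite sqr_sqrtr //; lra.
have k2_sqr : k2 ^+ 2 = E - (w2%:R - c) by rewrite sqr_sqrtr //; lra.
have A_mode1 := transfer_pow_mode k1_neq0 eig11 eig12 k1_sqr hA.
have A_mode2 := transfer_pow_mode k2_neq0 eig21 eig22 k2_sqr hA.
have /nbhs_ballP [eps eps_gt0 ballU] : nbhs (1 : 'M[R]_4) U by apply: open_nbhs_nbhs.
have [e e_gt0 ball_of_near] := transfer_pow_near1 A_mode1 A_mode2 eps_gt0.
have [n [n_gt0 [near1 near2]]] := simultaneous_recurrence k1 k2 e_gt0.
exists n; split => //; apply: U_Sp; split.
- exact/ballU/ball_of_near.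
- exact: transfer_pow_symplectic k1_neq0 k2_neq0 A_mode1 A_mode2 n.
Qed.
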